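(* Suppose $\omega\subseteq X\subseteq\beta\omega$ and $X$ is $(\mathfrak c,\omega^* )$-pseudocompact. Then $\operatorname{CL}(X)$ is pseudocompact.
   Context: $\beta\omega$ is the Stone–Čech compactification of the discrete space $\omega$ (ultrafilters on $\omega$), $\omega^*$ the set of free ultrafilters on $\omega$. For $p\in\omega^*$ and a sequence $(B_n:n\in\omega)$ of subsets of a space $X$, $x\in X$ is a $p$-limit of $(B_n)$ if $\{n:V\cap B_n\ne\emptyset\}\in p$ for every neighborhood $V$ of $x$. For a cardinal $\kappa$ and $M\subseteq\omega^*$, $X$ is $(\kappa,M)$-pseudocompact if for every family $\{(V^\alpha_n:n\in\omega):\alpha<\kappa\}$ of sequences of nonempty open subsets of $X$ there is $p\in M$ such that for every $\alpha<\kappa$ the sequence $(V^\alpha_n:n\in\omega)$ has a $p$-limit point in $X$. $\operatorname{CL}(X)$ is the set of nonempty closed subsets of $X$ with the Vietoris topology; pseudocompact means every continuous real-valued function is bounded. *)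

From Stdlib Require Import Reals List.
Open Scope R_scope.

(** Ultrafilters on omega = nat, and the Stone-Cech compactification beta omega. *)
Definition is_ultrafilter (p : (nat -> Prop) -> Prop) : Prop :=
  p (fun _ => True) /\
  ~ p (fun _ => False) /\
  (forall A B : nat -> Prop, p A -> (forall n, A n -> B n) -> p B) /\
  (forall A B : nat -> Prop, p A -> p B -> p (fun n => A n /\ B n)) /\
  (forall A : nat -> Prop, p A \/ p (fun n => ~ A n)).

Definition betaw : Type := { p : (nat -> Prop) -> Prop | is_ultrafilter p }.

Definition uf (p : betaw) : (nat -> Prop) -> Prop := proj1_sig p.

(** Principal ultrafilter at n (the copy of omega inside beta omega). *)
Definition principal_fun (n : nat) : (nat -> Prop) -> Prop := fun A => A n.

Lemma principal_ultra (n : nat) : is_ultrafilter (principal_fun n).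
Proof.
  unfold is_ultrafilter, principal_fun; repeat split; auto.
  intros A; destruct (Classical_Prop.classic (A n)); auto.
Qed.

Definition principal (n : nat) : betaw := exist _ (principal_fun n) (principal_ultra n).

(** omega^* : free ultrafilters (containing no singleton). *)
Definition free (p : betaw) : Prop := forall n : nat, ~ uf p (fun m => m = n).

Definition open_bw (U : betaw -> Prop) : Prop :=
  forall p, U p -> exists A : nat -> Prop, uf p A /\ forall q, uf q A -> U q.

Definition openX (X : betaw -> Prop) (V : betaw -> Prop) : Prop :=
  exists U, open_bw U /\ forall x, V x <-> (U x /\ X x).

Definition closedX (X : betaw -> Prop) (F : betaw -> Prop) : Prop :=
  (forall x, F x -> X x) /\ openX X (fun x => X x /\ ~ F x).

Definition nbhdX (X : betaw -> Prop) (x : betaw) (W : betaw -> Prop) : Prop :=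
  exists V, openX X V /\ V x /\ forall y, V y -> W y.

Definition p_limit (X : betaw -> Prop) (p : betaw) (B : nat -> betaw -> Prop)
  (x : betaw) : Prop :=
  X x /\ forall W, nbhdX X x W -> uf p (fun n => exists y, W y /\ B n y).

(** (c, omega^* )-pseudocompactness of X; families of size c are indexed by
    nat -> bool (a set of cardinality continuum). *)
Definition c_wstar_pseudocompact (X : betaw -> Prop) : Prop :=
  forall V : (nat -> bool) -> nat -> betaw -> Prop,
    (forall a n, openX X (V a n) /\ exists y, V a n y) ->
    exists p : betaw, free p /\
      forall a, exists x, p_limit X p (V a) x.

(** CL(X): nonempty closed subsets of X, with the Vietoris topology. *)
Definition CL (X : betaw -> Prop) : Type :=
  { F : betaw -> Prop | closedX X F /\ exists x, F x }.

Definition CLset {X} (F : CL X) : betaw -> Prop := proj1_sig F.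

Definition vietoris_subbasic (X : betaw -> Prop) (S : CL X -> Prop) : Prop :=
  exists U, openX X U /\
    ((forall F, S F <-> (forall x, CLset F x -> U x)) \/
     (forall F, S F <-> (exists x, CLset F x /\ U x))).

Definition vietoris_open (X : betaw -> Prop) (O : CL X -> Prop) : Prop :=
  forall F, O F -> exists l : list (CL X -> Prop),
    Forall (vietoris_subbasic X) l /\ Forall (fun S => S F) l /\
    forall G, Forall (fun S => S G) l -> O G.

Definition CL_pseudocompact (X : betaw -> Prop) : Prop :=
  forall f : CL X -> R,
    (forall W : R -> Prop, open_set W -> vietoris_open X (fun F => W (f F))) ->
    exists M : R, forall F, Rabs (f F) <= M.

From Stdlib Require Import Reals List.
From Stdlib Require Import Lra Lia Classical ClassicalEpsilon FunctionalExtensionality Cantor.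
Open Scope R_scope.

(* Finite subsets of omega are dense in CL(X), so an unbounded continuous
   f : CL(X) -> R satisfies |f(D_n)| > n for finite sets D_n.  Choosing one
   point of every D_n in all possible ways gives c sequences of isolated
   points; (c, omega* )-pseudocompactness yields a single free p for which
   each of them has a p-limit.  The closure G of these p-limits is a p-limit
   of (D_n) in the Vietoris topology, so f(G) would be a p-limit of the
   unbounded sequence f(D_n), which is impossible for a free p. *)

Definition singleton (k : nat) : nat -> Prop := fun m => m = k.

Lemma uf_superset (q : betaw) (A B : nat -> Prop) :
  uf q A -> (forall n, A n -> B n) -> uf q B.
Proof. destruct q as [q (h1 & h2 & h3 & h4 & h5)]; simpl; eauto. Qed.

Lemma uf_inter (q : betaw) (A B : nat -> Prop) :
  uf q A -> uf q B -> uf q (fun n => A n /\ B n).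
Proof. destruct q as [q (h1 & h2 & h3 & h4 & h5)]; simpl; eauto. Qed.

Lemma uf_not_empty (q : betaw) : ~ uf q (fun _ => False).
Proof. destruct q as [q (h1 & h2 & h3 & h4 & h5)]; simpl; eauto. Qed.

Lemma uf_or_compl (q : betaw) (A : nat -> Prop) : uf q A \/ uf q (fun n => ~ A n).
Proof. destruct q as [q (h1 & h2 & h3 & h4 & h5)]; simpl; eauto. Qed.

Lemma uf_full (q : betaw) : uf q (fun _ => True).
Proof. destruct q as [q (h1 & h2 & h3 & h4 & h5)]; simpl; eauto. Qed.

Lemma uf_inhabited (q : betaw) (A : nat -> Prop) : uf q A -> exists n, A n.
Proof.
  intros hA. apply NNPP; intros hno. apply (uf_not_empty q).
  apply (uf_superset q A); [exact hA|]. intros n hn; apply hno; exists n; exact hn.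
Qed.

Lemma uf_singleton_mem (q : betaw) (A : nat -> Prop) (k : nat) :
  uf q A -> uf q (singleton k) -> A k.
Proof.
  intros hA hk. destruct (uf_inhabited q _ (uf_inter q _ _ hA hk)) as [n [hn ->]].
  exact hn.
Qed.

Lemma uf_list_singleton (q : betaw) (l : list nat) :
  uf q (fun m => In m l) -> exists d, In d l /\ uf q (singleton d).
Proof.
  induction l as [|a l IH]; simpl; intros hl.
  - exfalso; exact (uf_not_empty q hl).
  - destruct (uf_or_compl q (singleton a)) as [ha|ha]; [exists a; auto|].
    destruct IH as [d [hd hqd]]; [|exists d; auto].
    apply (uf_superset q _ _ (uf_inter q _ _ hl ha)).
    intros n [[<-|hn] hna]; [exfalso; apply hna; reflexivity | exact hn].
Qed.

Lemma uf_Forall {A : Type} (q : betaw) (P : A -> nat -> Prop) (l : list A) :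
  Forall (fun a => uf q (P a)) l -> uf q (fun n => Forall (fun a => P a n) l).
Proof.
  induction 1 as [|a l ha _ IH].
  - apply (uf_superset q (fun _ => True)); [apply uf_full | constructor].
  - apply (uf_superset q _ _ (uf_inter q _ _ ha IH)). intros n [h1 h2]; constructor; auto.
Qed.

Lemma free_uf_unbounded (p : betaw) (P : nat -> Prop) :
  free p -> uf p P -> forall N, exists n, (N <= n)%nat /\ P n.
Proof.
  intros hp hP N. apply NNPP; intros hno.
  assert (hlt : uf p (fun n => (n < N)%nat)).
  { apply (uf_superset p P); [exact hP|]. intros n hn.
    destruct (Nat.lt_ge_cases n N) as [h|h]; [exact h | exfalso; apply hno; eauto]. }
  clear hP hno. induction N as [|N IH].
  - apply (uf_not_empty p), (uf_superset p _ _ hlt). intros n hn; inversion hn.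
  - destruct (uf_or_compl p (singleton N)) as [h|h]; [exact (hp N h)|].
    apply IH, (uf_superset p _ _ (uf_inter p _ _ hlt h)).
    intros n [h1 h2]. unfold singleton in h2. lia.
Qed.

Lemma openX_and (X V1 V2 : betaw -> Prop) :
  openX X V1 -> openX X V2 -> openX X (fun x => V1 x /\ V2 x).
Proof.
  intros [U1 [hU1 e1]] [U2 [hU2 e2]].
  exists (fun x => U1 x /\ U2 x); split.
  - intros q [h1 h2].
    destruct (hU1 q h1) as [A1 [hA1 k1]], (hU2 q h2) as [A2 [hA2 k2]].
    exists (fun n => A1 n /\ A2 n); split; [apply uf_inter; auto|].
    intros r hr; split; [apply k1 | apply k2]; apply (uf_superset r _ _ hr); tauto.
  - intros x; rewrite e1, e2; tauto.
Qed.

Lemma openX_full (X : betaw -> Prop) : openX X X.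
Proof.
  exists (fun _ => True); split; [|intros x; tauto].
  intros q _; exists (fun _ => True); split; [apply uf_full | auto].
Qed.

Lemma openX_basic (X : betaw -> Prop) (A : nat -> Prop) : openX X (fun q => X q /\ uf q A).
Proof.
  exists (fun q => uf q A); split; [|intros x; tauto].
  intros q hq; exists A; auto.
Qed.

Lemma openX_basic_nbhd (X V : betaw -> Prop) (x : betaw) :
  openX X V -> V x -> exists A, uf x A /\ forall q, X q -> uf q A -> V q.
Proof.
  intros [U [hU eV]] hx. apply eV in hx as [hUx _].
  destruct (hU x hUx) as [A [hA hAU]].
  exists A; split; [exact hA|]. intros q hq hqA. apply eV; auto.
Qed.

Lemma openX_meets_principal (X V : betaw -> Prop) (y : betaw) :
  (forall n, X (principal n)) -> openX X V -> V y -> exists d, V (principal d).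
Proof.
  intros hX hV hy. destruct (openX_basic_nbhd X V y hV hy) as [A [hA hAV]].
  destruct (uf_inhabited y A hA) as [d hd].
  exists d. apply hAV; [apply hX | exact hd].
Qed.

Lemma openX_principal_nbhd (X V : betaw -> Prop) (d : nat) (y : betaw) :
  openX X V -> V (principal d) -> X y -> uf y (singleton d) -> V y.
Proof.
  intros hV hd hy hyd. destruct (openX_basic_nbhd X V _ hV hd) as [A [hA hAV]].
  apply hAV; [exact hy|]. apply (uf_superset y _ _ hyd). intros n ->; exact hA.
Qed.

Definition closureX (X L : betaw -> Prop) : betaw -> Prop :=
  fun x => X x /\ forall A, uf x A -> exists z, L z /\ uf z A.

Lemma closureX_closed (X L : betaw -> Prop) : closedX X (closureX X L).
Proof.
  split; [intros x [hx _]; exact hx|].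
  exists (fun q => exists A, uf q A /\ forall z, L z -> ~ uf z A). split.
  - intros q [A [hA hno]]. exists A; split; [exact hA|]. intros r hr; exists A; auto.
  - intros x; split.
    + intros [hx hnot]. split; [|exact hx]. apply NNPP; intros hall.
      apply hnot; split; [exact hx|]. intros A hA. apply NNPP; intros hno.
      apply hall. exists A; split; [exact hA|]. intros z hz hzA; apply hno; eauto.
    + intros [[A [hA hno]] hx]. split; [exact hx|]. intros [_ hcl].
      destruct (hcl A hA) as [z [hz hzA]]. exact (hno z hz hzA).
Qed.

(* The closure in X of the finite set of isolated points {principal d | d in l}. *)
Definition finite_setX (X : betaw -> Prop) (l : list nat) : betaw -> Prop :=
  fun q => X q /\ exists d, In d l /\ uf q (singleton d).

Lemma finite_setX_closed (X : betaw -> Prop) (l : list nat) : closedX X (finite_setX X l).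
Proof.
  split; [intros x [hx _]; exact hx|].
  exists (fun q => forall d, In d l -> ~ uf q (singleton d)); split.
  - intros q hq. exists (fun m => ~ In m l). split.
    + destruct (uf_or_compl q (fun m => In m l)) as [h|h]; [|exact h].
      destruct (uf_list_singleton q l h) as [d [hd hqd]]. exfalso; exact (hq d hd hqd).
    + intros r hr d hd hrd. exact (uf_singleton_mem r _ d hr hrd hd).
  - intros x; unfold finite_setX; split.
    + intros [hx hno]; split; [|exact hx]. intros d hd hxd; apply hno; split; eauto.
    + intros [hno hx]; split; [exact hx|]. intros [_ [d [hd hxd]]]; exact (hno d hd hxd).
Qed.

Lemma finite_setX_principal (X : betaw -> Prop) (hX : forall n, X (principal n))
  (l : list nat) (d : nat) : In d l -> finite_setX X l (principal d).
Proof. intros hd; split; [apply hX | exists d; split; [exact hd | exact eq_refl]]. Qed.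

Lemma finite_setX_sub_open (X V : betaw -> Prop) (l : list nat) :
  openX X V -> (forall d, In d l -> V (principal d)) -> forall y, finite_setX X l y -> V y.
Proof.
  intros hV hl y [hy [d [hd hyd]]]. exact (openX_principal_nbhd X V d y hV (hl d hd) hy hyd).
Qed.

Definition finCL (X : betaw -> Prop) (hX : forall n, X (principal n)) (d0 : nat)
  (E : list nat) : CL X :=
  exist _ (finite_setX X (d0 :: E))
    (conj (finite_setX_closed X (d0 :: E))
       (ex_intro _ (principal d0) (finite_setX_principal X hX _ d0 (in_eq d0 E)))).

Definition vietoris_box (X V : betaw -> Prop) (Ms : list (betaw -> Prop)) (G : CL X) : Prop :=
  (forall y, CLset G y -> V y) /\ Forall (fun U => exists y, CLset G y /\ U y) Ms.

Lemma vietoris_subbasic_box (X : betaw -> Prop) (F : CL X) (l : list (CL X -> Prop)) :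
  Forall (vietoris_subbasic X) l -> Forall (fun S => S F) l ->
  exists V Ms, openX X V /\ Forall (openX X) Ms /\ vietoris_box X V Ms F /\
    forall G, vietoris_box X V Ms G -> Forall (fun S => S G) l.
Proof.
  induction 1 as [|S l hS _ IH]; intros hF.
  - exists X, nil. split; [apply openX_full|]. split; [constructor|].
    split; [|intros; constructor]. split; [|constructor].
    exact (proj1 (proj1 (proj2_sig F))).
  - apply Forall_cons_iff in hF as [hSF hlF].
    destruct (IH hlF) as [V [Ms [hV [hMs [[hFV hFMs] hbox]]]]].
    destruct hS as [U [hU [eS|eS]]].
    + exists (fun x => V x /\ U x), Ms.
      split; [apply openX_and; auto|]. split; [exact hMs|]. split.
      * split; [|exact hFMs]. intros y hy. split; [auto | exact (proj1 (eS F) hSF y hy)].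
      * intros G [hGV hGMs]. constructor.
        -- apply eS. intros y hy; exact (proj2 (hGV y hy)).
        -- apply hbox. split; [intros y hy; exact (proj1 (hGV y hy)) | exact hGMs].
    + exists V, (U :: Ms). split; [exact hV|]. split; [constructor; auto|]. split.
      * split; [exact hFV | constructor; [exact (proj1 (eS F) hSF) | exact hFMs]].
      * intros G [hGV hGMs]. apply Forall_cons_iff in hGMs as [hGU hGMs].
        constructor; [apply eS, hGU | apply hbox; split; assumption].
Qed.

Lemma vietoris_box_finCL (X : betaw -> Prop) (hX : forall n, X (principal n))
  (V : betaw -> Prop) (Ms : list (betaw -> Prop)) (F : CL X) :
  openX X V -> Forall (openX X) Ms -> vietoris_box X V Ms F ->
  exists d0 E, vietoris_box X V Ms (finCL X hX d0 E).
Proof.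
  intros hV hMs [hFV hFMs].
  assert (hE : exists E, (forall d, In d E -> V (principal d)) /\
                 Forall (fun U => exists d, In d E /\ U (principal d)) Ms).
  { induction Ms as [|U Ms IH].
    - exists nil; split; [intros d [] | constructor].
    - apply Forall_cons_iff in hMs as [hU hMs].
      apply Forall_cons_iff in hFMs as [[y [hy hyU]] hFMs].
      destruct (IH hMs hFMs) as [E [hEV hEMs]].
      destruct (openX_meets_principal X _ y hX (openX_and X V U hV hU) (conj (hFV y hy) hyU))
        as [d [hdV hdU]].
      exists (d :: E). split.
      + intros d' [<-|hd']; auto.
      + constructor; [exists d; split; [left|]; auto|].
        eapply Forall_impl; [|exact hEMs].
        intros U' [d' [hd' hU']]. exists d'; split; [right|]; auto. }
  destruct hE as [E [hEV hEMs]].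
  destruct (proj2 (proj2_sig F)) as [x hx].
  destruct (openX_meets_principal X V x hX hV (hFV x hx)) as [d0 hd0].
  exists d0, E. split.
  - apply finite_setX_sub_open; [exact hV|]. intros d [<-|hd]; auto.
  - eapply Forall_impl; [|exact hEMs]. intros U [d [hd hdU]].
    exists (principal d). split; [apply finite_setX_principal; [exact hX | right; exact hd] | exact hdU].
Qed.

Lemma finCL_dense (X : betaw -> Prop) (hX : forall n, X (principal n))
  (O : CL X -> Prop) (F : CL X) :
  vietoris_open X O -> O F -> exists d0 E, O (finCL X hX d0 E).
Proof.
  intros hO hF. destruct (hO F hF) as [l [hl [hlF hlO]]].
  destruct (vietoris_subbasic_box X F l hl hlF) as [V [Ms [hV [hMs [hbox hboxl]]]]].
  destruct (vietoris_box_finCL X hX V Ms F hV hMs hbox) as [d0 [E hE]].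
  exists d0, E. apply hlO, hboxl, hE.
Qed.

Definition CL_continuous (X : betaw -> Prop) (f : CL X -> R) : Prop :=
  forall W : R -> Prop, open_set W -> vietoris_open X (fun F => W (f F)).

Lemma open_set_abs_gt (c : R) : open_set (fun r => c < Rabs r).
Proof.
  intros x hx. assert (h : 0 < Rabs x - c) by lra. exists (mkposreal _ h).
  intros y hy. unfold disc in hy; simpl in hy.
  pose proof (Rabs_triang_inv x y). rewrite Rabs_minus_sym in hy. lra.
Qed.

Lemma open_set_dist_lt (c e : R) : open_set (fun r => Rabs (r - c) < e).
Proof.
  intros x hx. assert (h : 0 < e - Rabs (x - c)) by lra. exists (mkposreal _ h).
  intros y hy. unfold disc in hy; simpl in hy.
  pose proof (Rabs_triang (y - x) (x - c)) as htri.
  replace (y - x + (x - c)) with (y - c) in htri by ring. lra.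
Qed.

Lemma unbounded_on_finCL (X : betaw -> Prop) (hX : forall n, X (principal n)) (f : CL X -> R) :
  CL_continuous X f -> ~ (exists M, forall F, Rabs (f F) <= M) ->
  exists d0 E, forall n, INR n < Rabs (f (finCL X hX (d0 n) (E n))).
Proof.
  intros hf hunb.
  assert (hbig : forall n : nat, exists dE : nat * list nat,
             INR n < Rabs (f (finCL X hX (fst dE) (snd dE)))).
  { intros n. assert (hF : exists F, INR n < Rabs (f F)).
    { apply NNPP; intros hno. apply hunb. exists (INR n). intros F.
      apply Rnot_lt_le. intros hlt; apply hno; exists F; exact hlt. }
    destruct hF as [F hF].
    destruct (finCL_dense X hX _ F (hf _ (open_set_abs_gt (INR n))) hF) as [d0 [E hE]].
    exists (d0, E); exact hE. }
  destruct (choice _ hbig) as [dE hdE].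
  exists (fun n => fst (dE n)), (fun n => snd (dE n)). exact hdE.
Qed.

Lemma unbounded_seq_no_p_limit (p : betaw) (u : nat -> R) (c : R) :
  free p -> (forall n, INR n < Rabs (u n)) -> ~ uf p (fun n => Rabs (u n - c) < 1).
Proof.
  intros hp hu hc.
  destruct (INR_unbounded (Rabs c + 1)) as [N hN].
  destruct (free_uf_unbounded p _ hp hc N) as [n [hNn hn]].
  pose proof (le_INR _ _ hNn). pose proof (hu n). pose proof (Rabs_triang_inv (u n) c).
  lra.
Qed.

(* [decode a n] is some [k] with [a <n, k> = true], junk if there is none. *)
Definition decode (a : nat -> bool) (n : nat) : nat :=
  epsilon (inhabits 0%nat) (fun k => a (to_nat (n, k)) = true).

Definition encode (t : nat -> nat) : nat -> bool :=
  fun m => Nat.eqb (snd (of_nat m)) (t (fst (of_nat m))).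

Lemma decode_encode (t : nat -> nat) : decode (encode t) = t.
Proof.
  extensionality n. unfold decode.
  pose proof (epsilon_spec (inhabits 0%nat) (fun k => encode t (to_nat (n, k)) = true)) as h.
  set (k := epsilon _ _) in h |- *.
  unfold encode in h. rewrite cancel_of_to in h. cbn [fst snd] in h.
  apply Nat.eqb_eq, h. exists (t n). rewrite cancel_of_to. apply Nat.eqb_refl.
Qed.

Lemma c_wstar_pseudocompact_seq_index (X : betaw -> Prop) :
  c_wstar_pseudocompact X ->
  forall V : (nat -> nat) -> nat -> betaw -> Prop,
    (forall t n, openX X (V t n) /\ exists y, V t n y) ->
    exists p, free p /\ forall t, exists x, p_limit X p (V t) x.
Proof.
  intros hpc V hV. destruct (hpc (fun a => V (decode a))) as [p [hp hlim]]; [intros; apply hV|].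
  exists p; split; [exact hp|]. intros t.
  destruct (hlim (encode t)) as [x hx]. rewrite decode_encode in hx. exists x; exact hx.
Qed.

Definition singletonX (X : betaw -> Prop) (d : nat) : betaw -> Prop :=
  fun q => X q /\ uf q (singleton d).

Lemma p_limit_singletonX (X : betaw -> Prop) (p : betaw) (s : nat -> nat) (z : betaw)
  (A : nat -> Prop) :
  p_limit X p (fun n => singletonX X (s n)) z -> uf z A -> uf p (fun n => A (s n)).
Proof.
  intros [hz hlim] hA.
  assert (hnb : nbhdX X z (fun q => X q /\ uf q A)).
  { exists (fun q => X q /\ uf q A). split; [apply openX_basic | split; auto]. }
  apply (uf_superset p _ _ (hlim _ hnb)). intros n [y [[_ hyA] [_ hys]]].
  exact (uf_singleton_mem y A _ hyA hys).
Qed.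

Lemma nth_In_cons_default (d : nat) (l : list nat) (i : nat) : In (nth i (d :: l) d) (d :: l).
Proof.
  destruct (Nat.lt_ge_cases i (length (d :: l))) as [h|h].
  - apply nth_In, h.
  - rewrite nth_overflow by exact h. apply in_eq.
Qed.

Section VietorisLimit.

Variables (X : betaw -> Prop) (hX : forall n, X (principal n)).
Variables (p : betaw) (d0 : nat -> nat) (E : nat -> list nat).

Let D (n : nat) : CL X := finCL X hX (d0 n) (E n).

Definition select (t : nat -> nat) (n : nat) : nat := nth (t n) (d0 n :: E n) (d0 n).

Definition select_limit (z : betaw) : Prop :=
  exists t, p_limit X p (fun n => singletonX X (select t n)) z.

Hypothesis select_limit_exists :
  forall t, exists z, p_limit X p (fun n => singletonX X (select t n)) z.

Lemma limit_set_spec :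
  closedX X (closureX X select_limit) /\ exists x, closureX X select_limit x.
Proof.
  split; [apply closureX_closed|].
  destruct (select_limit_exists (fun _ => 0%nat)) as [z hz].
  exists z. split; [exact (proj1 hz)|].
  intros A hA. exists z. split; [exists (fun _ => 0%nat); exact hz | exact hA].
Qed.

Definition limit_set : CL X := exist _ (closureX X select_limit) limit_set_spec.

Lemma limit_set_upper (U : betaw -> Prop) :
  openX X U -> (forall y, CLset limit_set y -> U y) ->
  uf p (fun n => forall y, CLset (D n) y -> U y).
Proof.
  intros hU hGU.
  destruct (uf_or_compl p (fun n => forall y, CLset (D n) y -> U y)) as [h|hbad];
    [exact h | exfalso].
  assert (hwit : forall n, exists i, ~ (forall y, CLset (D n) y -> U y) ->
                   ~ U (principal (nth i (d0 n :: E n) (d0 n)))).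
  { intros n.
    destruct (classic (forall i, U (principal (nth i (d0 n :: E n) (d0 n))))) as [hall|hsome].
    - exists 0%nat. intros hno; exfalso; apply hno.
      apply finite_setX_sub_open; [exact hU|]. intros d hd.
      destruct (In_nth _ _ (d0 n) hd) as [i [_ <-]]. apply hall.
    - destruct (not_all_ex_not _ _ hsome) as [i hi]. exists i; intros _; exact hi. }
  destruct (choice _ hwit) as [t ht].
  destruct (select_limit_exists t) as [z hz].
  assert (hzU : U z).
  { apply hGU. split; [exact (proj1 hz)|].
    intros A hA. exists z. split; [exists t; exact hz | exact hA]. }
  destruct (openX_basic_nbhd X U z hU hzU) as [A [hA hAU]].
  destruct (uf_inhabited p _ (uf_inter p _ _ (p_limit_singletonX X p _ z A hz hA) hbad))
    as [n [hnA hnbad]].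
  apply (ht n hnbad). apply hAU; [apply hX | exact hnA].
Qed.

Lemma limit_set_lower (U : betaw -> Prop) :
  openX X U -> (exists y, CLset limit_set y /\ U y) ->
  uf p (fun n => exists y, CLset (D n) y /\ U y).
Proof.
  intros hU [y [[_ hy] hyU]].
  destruct (openX_basic_nbhd X U y hU hyU) as [A [hA hAU]].
  destruct (hy A hA) as [z [[t hz] hzA]].
  apply (uf_superset p _ _ (p_limit_singletonX X p _ z A hz hzA)). intros n hn.
  exists (principal (select t n)). split.
  - apply finite_setX_principal; [exact hX | apply nth_In_cons_default].
  - apply hAU; [apply hX | exact hn].
Qed.

Lemma limit_set_subbasic (S : CL X -> Prop) :
  vietoris_subbasic X S -> S limit_set -> uf p (fun n => S (D n)).
Proof.
  intros [U [hU [eS|eS]]] hS.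
  - apply (uf_superset p _ _ (limit_set_upper U hU (proj1 (eS _) hS))).
    intros n hn; apply eS, hn.
  - apply (uf_superset p _ _ (limit_set_lower U hU (proj1 (eS _) hS))).
    intros n hn; apply eS, hn.
Qed.

Lemma limit_set_vietoris_limit (O : CL X -> Prop) :
  vietoris_open X O -> O limit_set -> uf p (fun n => O (D n)).
Proof.
  intros hO hG. destruct (hO _ hG) as [l [hl [hlG hlO]]].
  assert (hlim : Forall (fun S => uf p (fun n => S (D n))) l).
  { rewrite Forall_forall in hl, hlG |- *. intros S hS. apply limit_set_subbasic; [apply hl | apply hlG]; exact hS. }
  apply (uf_superset p _ _ (uf_Forall p (fun S n => S (D n)) l hlim)).
  intros n hn; apply hlO, hn.
Qed.

End VietorisLimit.

Theorem corollary3p3 (X : betaw -> Prop) :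
  (forall n : nat, X (principal n)) ->
  c_wstar_pseudocompact X ->
  CL_pseudocompact X.
Proof.
  intros hX hpc f hf. apply NNPP; intros hunb.
  destruct (unbounded_on_finCL X hX f hf hunb) as [d0 [E hbig]].
  destruct (c_wstar_pseudocompact_seq_index X hpc
              (fun t n => singletonX X (select d0 E t n))) as [p [hp hlim]].
  { intros t n. split; [apply openX_basic|].
    exists (principal (select d0 E t n)). split; [apply hX | exact eq_refl]. }
  set (G := limit_set X p d0 E hlim).
  apply (unbounded_seq_no_p_limit p _ (f G) hp hbig).
  apply (limit_set_vietoris_limit X hX p d0 E hlim (fun F => Rabs (f F - f G) < 1)).
  - exact (hf _ (open_set_dist_lt (f G) 1)).
  - unfold Rminus; rewrite Rplus_opp_r, Rabs_R0; lra.
Qed.
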